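(* Let $\mathbb{A}$ be a 2-category and $p:e\to b$ a 1-cell such that $\mathbb{A}$ has the two-dimensional cokernel diagram of $p$, a right Kan extension $(t,\gamma)$ of $p$ along $p$ exists, and it is preserved by $\delta^0:b\to b\uparrow_pb$. Let $\mathsf{T}$ be the codensity monad of $p$. Then $\mathbb{A}$ has an Eilenberg–Moore object of $\mathsf{T}$ if and only if $\mathbb{A}$ has a lax descent object of the two-dimensional cokernel diagram of $p$, and in that case the semantic factorization $p=u\,p^{\mathsf{T}}$ of $p$ is isomorphic to the semantic lax descent factorization $p=d\,p^{H}$ of $p$, i.e. there is an isomorphism $\varphi:L\to b^{\mathsf{T}}$ with $u\varphi=d$ and $\varphi p^H=p^{\mathsf{T}}$.
   Context: A 2-category is a $\mathbf{Cat}$-enriched category; composition of 1-cells is juxtaposition, vertical composition of 2-cells is $\cdot$, horizontal composition is $\ast$, $\mathrm{id}_f$ is the identity 2-cell on $f$. Opcomma object of $p$ along itself: an object $b\uparrow_p b$ with 1-cells $\delta^0,\delta^1:b\to b\uparrow_p b$ and a 2-cell $\alpha:\delta^1p\Rightarrow\delta^0p$ such that for every object $y$ the functor $h\mapsto(h\delta^0,h\delta^1,\mathrm{id}_h\ast\alpha)$, $\xi\mapsto(\xi\ast\mathrm{id}_{\delta^0},\xi\ast\mathrm{id}_{\delta^1})$ is an isomorphism from $\mathbb{A}(b\uparrow_p b,y)$ onto the category of triples $(h_0,h_1:b\to y,\ \beta:h_1p\Rightarrow h_0p)$ with morphisms pairs of 2-cells $(\xi_0:h_0\Rightarrow h_0',\xi_1:h_1\Rightarrow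 h_1')$ satisfying $(\xi_0\ast\mathrm{id}_p)\cdot\beta=\beta'\cdot(\xi_1\ast\mathrm{id}_p)$. Two-dimensional pushout of a span $f_0:c\to c_0$, $f_1:c\to c_1$: an object $P$ with $q_0:c_0\to P$, $q_1:c_1\to P$, $q_0f_0=q_1f_1$, such that for every $y$, $k\mapsto(kq_0,kq_1)$ is an isomorphism from $\mathbb{A}(P,y)$ onto the category of pairs $(k_0,k_1)$ with $k_0f_0=k_1f_1$, whose morphisms are pairs of 2-cells $(\xi_0,\xi_1)$ with $\xi_0\ast\mathrm{id}_{f_0}=\xi_1\ast\mathrm{id}_{f_1}$. $\mathbb{A}$ has the two-dimensional cokernel diagram of $p$ if it has an opcomma object $b\uparrow_p b$ and a two-dimensional pushout $b\uparrow_pb\uparrow_pb$ of the span $(\delta^0,\delta^1)$, with 1-cells $D^0,D^2$ satisfying $D^2\delta^0=D^0\delta^1$; $D^1$ is the unique 1-cell with $D^1\delta^1=D^2\delta^1$, $D^1\delta^0=D^0\delta^0$, $\mathrm{id}_{D^1}\ast\alpha=(\mathrm{id}_{D^0}\ast\alpha)\cdot(\mathrm{id}_{D^2}\ast\alpha)$; $s^0:b\uparrow_pb\to b$ is the unique 1-cell with $s^0\delta^0=s^0\delta^1=\mathrm{id}_b$, $\mathrm{id}_{s^0}\ast\alpha=\mathrm{id}_p$. The two-dimensional cokernel diagram of $p$ is the diagram formed by $b,b\uparrow_pb,b\uparrow_pb\uparrow_pb$ and $\delta^0,\delta^1,s^0,D^0,D^1,D^2$. Lax descent object: for an object $y$,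 $\mathrm{Desc}_p(y)$ has objects pairs $(h:y\to b,\beta:\delta^1h\Rightarrow\delta^0h)$ with $(\mathrm{id}_{D^0}\ast\beta)\cdot(\mathrm{id}_{D^2}\ast\beta)=\mathrm{id}_{D^1}\ast\beta$ and $\mathrm{id}_{s^0}\ast\beta=\mathrm{id}_h$, and morphisms $(h_1,\beta_1)\to(h_0,\beta_0)$ the 2-cells $\xi:h_1\Rightarrow h_0$ with $\beta_0\cdot(\mathrm{id}_{\delta^1}\ast\xi)=(\mathrm{id}_{\delta^0}\ast\xi)\cdot\beta_1$. A lax descent object of the two-dimensional cokernel diagram is an object $L$ with $d:L\to b$ and $\Psi:\delta^1d\Rightarrow\delta^0d$ such that for each $y$ the functor $g\mapsto(dg,\Psi\ast\mathrm{id}_g)$, $\xi\mapsto\mathrm{id}_d\ast\xi$ is an isomorphism $\mathbb{A}(y,L)\to\mathrm{Desc}_p(y)$. Since $(p,\alpha)\in\mathrm{Desc}_p(e)$, there is a unique $p^H:e\to L$ with $dp^H=p$ and $\Psi\ast\mathrm{id}_{p^H}=\alpha$; $p=d\,p^H$ is the semantic lax descent factorization of $p$. Right Kan extension of $f:z\to y$ along $g:z\to w$: a pair $(r,\gamma:rg\Rightarrow f)$ such that for each $k:w\to y$, $\beta\mapsto\gamma\cdot(\beta\ast\mathrm{id}_g)$ is a bijection from 2-cells $k\Rightarrow r$ to 2-cells $kg\Rightarrow f$; a 1-cell $\delta$ preserves it if $(\delta r,\mathrm{id}_\delta\ast\gamma)$ is a right Kan extension of $\delta f$ along $g$. Codensity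 monad $\mathsf{T}=(b,t,m,\eta)$: $m:tt\Rightarrow t$ unique with $\gamma\cdot(m\ast\mathrm{id}_p)=\gamma\cdot(\mathrm{id}_t\ast\gamma)$, $\eta:\mathrm{id}_b\Rightarrow t$ unique with $\gamma\cdot(\eta\ast\mathrm{id}_p)=\mathrm{id}_p$. Eilenberg–Moore object: for $y$, $\mathrm{Alg}_{\mathsf{T}}(y)$ has objects $(h:y\to b,\beta:th\Rightarrow h)$ with $\beta\cdot(\mathrm{id}_t\ast\beta)=\beta\cdot(m\ast\mathrm{id}_h)$, $\beta\cdot(\eta\ast\mathrm{id}_h)=\mathrm{id}_h$, morphisms 2-cells $\xi:h_1\Rightarrow h_0$ with $\xi\cdot\beta_1=\beta_0\cdot(\mathrm{id}_t\ast\xi)$. An Eilenberg–Moore object is $b^{\mathsf{T}}$ with $u:b^{\mathsf{T}}\to b$, $\mu:tu\Rightarrow u$ such that $g\mapsto(ug,\mu\ast\mathrm{id}_g)$, $\xi\mapsto\mathrm{id}_u\ast\xi$ is an isomorphism $\mathbb{A}(y,b^{\mathsf{T}})\to\mathrm{Alg}_{\mathsf{T}}(y)$ for each $y$. The semantic factorization of $p$ is $p=u\,p^{\mathsf{T}}$ with $p^{\mathsf{T}}:e\to b^{\mathsf{T}}$ the unique 1-cell with $up^{\mathsf{T}}=p$ and $\mu\ast\mathrm{id}_{p^{\mathsf{T}}}=\gamma$. *)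

(* Vertical composition is totalised (its value on non-composable pairs
   is unconstrained junk); all axioms are conditioned on composability. *)
Record TwoCatData : Type := {
  ob : Type;
  hom : ob -> ob -> Type;
  cell : ob -> ob -> Type;
  src : forall a b, cell a b -> hom a b;
  tgt : forall a b, cell a b -> hom a b;
  id1 : forall a, hom a a;
  comp1 : forall a b c, hom b c -> hom a b -> hom a c;
  id2 : forall a b, hom a b -> cell a b;
  vcomp : forall a b, cell a b -> cell a b -> cell a b;
  hcomp : forall a b c, cell b c -> cell a b -> cell a c
}.

Arguments ob C : rename.
Arguments hom {C} _ _ : rename.
Arguments cell {C} _ _ : rename.
Arguments src {C a b} _ : rename.
Arguments tgt {C a b} _ : rename.
Arguments id1 {C} a : rename.
Arguments comp1 {C a b c} _ _ : rename.
Arguments id2 {C a b} _ : rename.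
Arguments vcomp {C a b} _ _ : rename.
Arguments hcomp {C a b c} _ _ : rename.

Declare Scope tc_scope.
Notation "g ∘ f" := (comp1 g f) (at level 30, right associativity) : tc_scope.
Notation "β ⋆ α" := (hcomp β α) (at level 35, right associativity) : tc_scope.
Notation "β · α" := (vcomp β α) (at level 45, right associativity) : tc_scope.
Open Scope tc_scope.

Record IsTwoCat (C : TwoCatData) : Prop := {
  src_id2 : forall (a b : ob C) (f : hom a b), src (id2 f) = f;
  tgt_id2 : forall (a b : ob C) (f : hom a b), tgt (id2 f) = f;
  src_vcomp : forall (a b : ob C) (α β : cell a b),
      tgt α = src β -> src (β · α) = src α;
  tgt_vcomp : forall (a b : ob C) (α β : cell a b),
      tgt α = src β -> tgt (β · α) = tgt β;
  vcomp_assoc : forall (a b : ob C) (α β γ : cell a b),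
      tgt α = src β -> tgt β = src γ -> γ · (β · α) = (γ · β) · α;
  vcomp_id_l : forall (a b : ob C) (α : cell a b), id2 (tgt α) · α = α;
  vcomp_id_r : forall (a b : ob C) (α : cell a b), α · id2 (src α) = α;
  comp1_assoc : forall (a b c d : ob C) (f : hom a b) (g : hom b c) (h : hom c d),
      h ∘ (g ∘ f) = (h ∘ g) ∘ f;
  comp1_id_l : forall (a b : ob C) (f : hom a b), id1 b ∘ f = f;
  comp1_id_r : forall (a b : ob C) (f : hom a b), f ∘ id1 a = f;
  src_hcomp : forall (a b c : ob C) (β : cell b c) (α : cell a b),
      src (β ⋆ α) = src β ∘ src α;
  tgt_hcomp : forall (a b c : ob C) (β : cell b c) (α : cell a b),
      tgt (β ⋆ α) = tgt β ∘ tgt α;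
  hcomp_assoc : forall (a b c d : ob C) (α : cell a b) (β : cell b c) (γ : cell c d),
      γ ⋆ (β ⋆ α) = (γ ⋆ β) ⋆ α;
  hcomp_id_l : forall (a b : ob C) (α : cell a b), id2 (id1 b) ⋆ α = α;
  hcomp_id_r : forall (a b : ob C) (α : cell a b), α ⋆ id2 (id1 a) = α;
  hcomp_id2 : forall (a b c : ob C) (f : hom a b) (g : hom b c),
      id2 g ⋆ id2 f = id2 (g ∘ f);
  interchange : forall (a b c : ob C) (α α' : cell a b) (β β' : cell b c),
      tgt α = src α' -> tgt β = src β' ->
      (β' · β) ⋆ (α' · α) = (β' ⋆ α') · (β ⋆ α)
}.

Section TwoCatNotions.
Context {C : TwoCatData}.

Definition is2 {a b : ob C} (f g : hom a b) (α : cell a b) : Prop :=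
  src α = f /\ tgt α = g.

Definition is_opcomma {e b : ob C} (p : hom e b)
    (bb : ob C) (d0 d1 : hom b bb) (al : cell e bb) : Prop :=
  is2 (d1 ∘ p) (d0 ∘ p) al /\
  forall y : ob C,
    (forall (h0 h1 : hom b y) (β : cell e y), is2 (h1 ∘ p) (h0 ∘ p) β ->
       exists! h : hom bb y, h ∘ d0 = h0 /\ h ∘ d1 = h1 /\ id2 h ⋆ al = β) /\
    (forall (h h' : hom bb y) (ξ0 ξ1 : cell b y),
       is2 (h ∘ d0) (h' ∘ d0) ξ0 -> is2 (h ∘ d1) (h' ∘ d1) ξ1 ->
       (ξ0 ⋆ id2 p) · (id2 h ⋆ al) = (id2 h' ⋆ al) · (ξ1 ⋆ id2 p) ->
       exists! ξ : cell bb y, is2 h h' ξ /\ ξ ⋆ id2 d0 = ξ0 /\ ξ ⋆ id2 d1 = ξ1).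

Definition is_2pushout {c c0 c1 : ob C} (f0 : hom c c0) (f1 : hom c c1)
    (P : ob C) (q0 : hom c0 P) (q1 : hom c1 P) : Prop :=
  q0 ∘ f0 = q1 ∘ f1 /\
  forall y : ob C,
    (forall (k0 : hom c0 y) (k1 : hom c1 y), k0 ∘ f0 = k1 ∘ f1 ->
       exists! k : hom P y, k ∘ q0 = k0 /\ k ∘ q1 = k1) /\
    (forall (k k' : hom P y) (ξ0 : cell c0 y) (ξ1 : cell c1 y),
       is2 (k ∘ q0) (k' ∘ q0) ξ0 -> is2 (k ∘ q1) (k' ∘ q1) ξ1 ->
       ξ0 ⋆ id2 f0 = ξ1 ⋆ id2 f1 ->
       exists! ξ : cell P y, is2 k k' ξ /\ ξ ⋆ id2 q0 = ξ0 /\ ξ ⋆ id2 q1 = ξ1).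

(* The two-dimensional cokernel diagram of p: opcomma object, pushout of
   (δ0, δ1) with q0 = D2, q1 = D0, and the induced D1 and s0
   (characterised by their defining properties, which determine them
   uniquely). *)
Definition is_2cokernel_diagram {e b : ob C} (p : hom e b)
    (bb : ob C) (d0 d1 : hom b bb) (al : cell e bb)
    (bbb : ob C) (D0 D1 D2 : hom bb bbb) (s0 : hom bb b) : Prop :=
  is_opcomma p bb d0 d1 al /\
  is_2pushout d0 d1 bbb D2 D0 /\
  (D1 ∘ d1 = D2 ∘ d1 /\ D1 ∘ d0 = D0 ∘ d0 /\
   id2 D1 ⋆ al = (id2 D0 ⋆ al) · (id2 D2 ⋆ al)) /\
  (s0 ∘ d0 = id1 b /\ s0 ∘ d1 = id1 b /\ id2 s0 ⋆ al = id2 p).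

Definition in_Desc {b bb bbb : ob C} (d0 d1 : hom b bb)
    (D0 D1 D2 : hom bb bbb) (s0 : hom bb b)
    (y : ob C) (h : hom y b) (β : cell y bb) : Prop :=
  is2 (d1 ∘ h) (d0 ∘ h) β /\
  (id2 D0 ⋆ β) · (id2 D2 ⋆ β) = id2 D1 ⋆ β /\
  id2 s0 ⋆ β = id2 h.

Definition is_lax_descent_object {b bb bbb : ob C} (d0 d1 : hom b bb)
    (D0 D1 D2 : hom bb bbb) (s0 : hom bb b)
    (L : ob C) (d : hom L b) (Ψ : cell L bb) : Prop :=
  in_Desc d0 d1 D0 D1 D2 s0 L d Ψ /\
  forall y : ob C,
    (forall (h : hom y b) (β : cell y bb), in_Desc d0 d1 D0 D1 D2 s0 y h β ->
       exists! g : hom y L, d ∘ g = h /\ Ψ ⋆ id2 g = β) /\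
    (forall (g1 g0 : hom y L) (ξ' : cell y b),
       is2 (d ∘ g1) (d ∘ g0) ξ' ->
       (Ψ ⋆ id2 g0) · (id2 d1 ⋆ ξ') = (id2 d0 ⋆ ξ') · (Ψ ⋆ id2 g1) ->
       exists! ξ : cell y L, is2 g1 g0 ξ /\ id2 d ⋆ ξ = ξ').

Definition is_right_kan {z y w : ob C} (f : hom z y) (g : hom z w)
    (r : hom w y) (γ : cell z y) : Prop :=
  is2 (r ∘ g) f γ /\
  forall (k : hom w y) (θ : cell z y), is2 (k ∘ g) f θ ->
    exists! β : cell w y, is2 k r β /\ γ · (β ⋆ id2 g) = θ.

(* Multiplication and unit of the codensity monad (characterised by their
   defining equations, which determine them uniquely). *)
Definition is_codensity_mult {e b : ob C} (p : hom e b) (t : hom b b)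
    (γ : cell e b) (m : cell b b) : Prop :=
  is2 (t ∘ t) t m /\ γ · (m ⋆ id2 p) = γ · (id2 t ⋆ γ).

Definition is_codensity_unit {e b : ob C} (p : hom e b) (t : hom b b)
    (γ : cell e b) (η : cell b b) : Prop :=
  is2 (id1 b) t η /\ γ · (η ⋆ id2 p) = id2 p.

Definition in_Alg {b : ob C} (t : hom b b) (m η : cell b b)
    (y : ob C) (h : hom y b) (β : cell y b) : Prop :=
  is2 (t ∘ h) h β /\
  β · (id2 t ⋆ β) = β · (m ⋆ id2 h) /\
  β · (η ⋆ id2 h) = id2 h.

Definition is_EM_object {b : ob C} (t : hom b b) (m η : cell b b)
    (bT : ob C) (u : hom bT b) (μ : cell bT b) : Prop :=
  in_Alg t m η bT u μ /\
  forall y : ob C,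
    (forall (h : hom y b) (β : cell y b), in_Alg t m η y h β ->
       exists! g : hom y bT, u ∘ g = h /\ μ ⋆ id2 g = β) /\
    (forall (g1 g0 : hom y bT) (ξ' : cell y b),
       is2 (u ∘ g1) (u ∘ g0) ξ' ->
       ξ' · (μ ⋆ id2 g1) = (μ ⋆ id2 g0) · (id2 t ⋆ ξ') ->
       exists! ξ : cell y bT, is2 g1 g0 ξ /\ id2 u ⋆ ξ = ξ').

Definition is_iso1 {a b : ob C} (f : hom a b) : Prop :=
  exists g : hom b a, g ∘ f = id1 a /\ f ∘ g = id1 b.

End TwoCatNotions.

(* The opcomma property gives r : b↑b → b with r δ0 = 1, r δ1 = t and r α = γ, and
   the preservation of the Kan extension by δ0 gives σ : δ1 ⇒ δ0 t with
   (δ0 γ)·(σ p) = α.  The 2-cell ω0 : 1 ⇒ δ0 r with components 1 and σ is the unit of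
   an adjunction r ⊣ δ0 with identity counit, and transposing along it,
   β ↦ (δ0 β)·(σ h) is a bijection from 2-cells t h ⇒ h to 2-cells δ1 h ⇒ δ0 h with
   inverse Ψ ↦ r Ψ, compatible with whiskering and with morphisms.  It matches algebra
   structures with descent data: s0 σ = η matches the unit laws, and whiskering with
   Q : b↑b↑b → b (Q D2 = t r, Q D0 = r) turns the cocycle condition into
   associativity, using ω1 : Q D1 ⇒ r with components 1 and m, while
   ω2 : 1 ⇒ D0 δ0 Q makes this whiskering injective.  Hence Alg_T(y) ≅ Desc_p(y)
   naturally in y, so the same objects represent both; as (p, γ) corresponds to
   (p, α), the semantic factorizations agree along the comparison of
   Eilenberg–Moore objects. *)

From Stdlib Require Import Setoid.

Section TwoCellCalculus.
Context {C : TwoCatData} (HC : IsTwoCat C).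

Lemma comp1_assoc_r {a b c d : ob C} (f : hom a b) (g : hom b c) (h : hom c d) :
  (h ∘ g) ∘ f = h ∘ (g ∘ f).
Proof. symmetry; apply (comp1_assoc _ HC). Qed.

Lemma comp1_eq_r {a b c d : ob C} {k : hom c d} {g : hom b c} {r : hom b d} :
  k ∘ g = r -> forall x : hom a b, k ∘ (g ∘ x) = r ∘ x.
Proof. intros <- x; apply (comp1_assoc _ HC). Qed.

Lemma is2_id2 {a b : ob C} (f : hom a b) : is2 f f (id2 f).
Proof. split; [apply (src_id2 _ HC) | apply (tgt_id2 _ HC)]. Qed.

Lemma is2_vcomp {a b : ob C} (f g g' h : hom a b) (α β : cell a b) :
  is2 f g α -> is2 g' h β -> g = g' -> is2 f h (β · α).
Proof.
  intros [<- Hα] [Hβ <-] <-.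
  split; [apply (src_vcomp _ HC) | apply (tgt_vcomp _ HC)]; congruence.
Qed.

Lemma is2_hcomp {a b c : ob C} (f g : hom a b) (f' g' : hom b c)
    (α : cell a b) (β : cell b c) :
  is2 f g α -> is2 f' g' β -> is2 (f' ∘ f) (g' ∘ g) (β ⋆ α).
Proof.
  intros [<- <-] [<- <-].
  split; [apply (src_hcomp _ HC) | apply (tgt_hcomp _ HC)].
Qed.

Lemma is2_congr {a b : ob C} (f g f' g' : hom a b) (α : cell a b) :
  is2 f g α -> f = f' -> g = g' -> is2 f' g' α.
Proof. intros H <- <-; exact H. Qed.

Lemma id2_vcomp {a b : ob C} (f g : hom a b) (α : cell a b) :
  is2 f g α -> id2 g · α = α.
Proof. intros [_ <-]; apply (vcomp_id_l _ HC). Qed.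

Lemma vcomp_id2 {a b : ob C} (f g : hom a b) (α : cell a b) :
  is2 f g α -> α · id2 f = α.
Proof. intros [<- _]; apply (vcomp_id_r _ HC). Qed.

Lemma vcompA {a b : ob C} (f g h k : hom a b) (α β γ : cell a b) :
  is2 f g α -> is2 g h β -> is2 h k γ -> γ · (β · α) = (γ · β) · α.
Proof. intros [_ H1] [H2 H3] [H4 _]; apply (vcomp_assoc _ HC); congruence. Qed.

Lemma whiskerl_vcomp {a b c : ob C} (k : hom b c) (f g h : hom a b) (α β : cell a b) :
  is2 f g α -> is2 g h β -> id2 k ⋆ (β · α) = (id2 k ⋆ β) · (id2 k ⋆ α).
Proof.
  intros [_ Hα] [Hβ _].
  rewrite <- (id2_vcomp k k (id2 k)) at 1 by apply is2_id2.
  apply (interchange _ HC); [congruence | now rewrite (src_id2 _ HC), (tgt_id2 _ HC)].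
Qed.

Lemma whiskerr_vcomp {a b c : ob C} (k : hom a b) (f g h : hom b c) (α β : cell b c) :
  is2 f g α -> is2 g h β -> (β · α) ⋆ id2 k = (β ⋆ id2 k) · (α ⋆ id2 k).
Proof.
  intros [_ Hα] [Hβ _].
  rewrite <- (id2_vcomp k k (id2 k)) at 1 by apply is2_id2.
  apply (interchange _ HC); [now rewrite (src_id2 _ HC), (tgt_id2 _ HC) | congruence].
Qed.

Lemma hcomp_vcomp_l {a b c : ob C} (f f' : hom b c) (g g' : hom a b)
    (α : cell b c) (β : cell a b) :
  is2 f f' α -> is2 g g' β -> α ⋆ β = (α ⋆ id2 g') · (id2 f ⋆ β).
Proof.
  intros Hα Hβ.
  rewrite <- (vcomp_id2 _ _ _ Hα) at 1; rewrite <- (id2_vcomp _ _ _ Hβ) at 1.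
  destruct Hα as [Hα _], Hβ as [_ Hβ].
  apply (interchange _ HC);
    [now rewrite Hβ, (src_id2 _ HC) | now rewrite Hα, (tgt_id2 _ HC)].
Qed.

Lemma hcomp_vcomp_r {a b c : ob C} (f f' : hom b c) (g g' : hom a b)
    (α : cell b c) (β : cell a b) :
  is2 f f' α -> is2 g g' β -> α ⋆ β = (id2 f' ⋆ β) · (α ⋆ id2 g).
Proof.
  intros Hα Hβ.
  rewrite <- (id2_vcomp _ _ _ Hα) at 1; rewrite <- (vcomp_id2 _ _ _ Hβ) at 1.
  destruct Hα as [_ Hα], Hβ as [Hβ _].
  apply (interchange _ HC);
    [now rewrite Hβ, (tgt_id2 _ HC) | now rewrite Hα, (src_id2 _ HC)].
Qed.

Lemma whisker_exchange {a b c : ob C} (f f' : hom b c) (g g' : hom a b)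
    (α : cell b c) (β : cell a b) :
  is2 f f' α -> is2 g g' β ->
  (α ⋆ id2 g') · (id2 f ⋆ β) = (id2 f' ⋆ β) · (α ⋆ id2 g).
Proof.
  intros Hα Hβ.
  now rewrite <- (hcomp_vcomp_l _ _ _ _ _ _ Hα Hβ), <- (hcomp_vcomp_r _ _ _ _ _ _ Hα Hβ).
Qed.

Lemma whiskerl_comp {a b c d : ob C} (f : hom c d) (g : hom b c) (α : cell a b) :
  id2 f ⋆ (id2 g ⋆ α) = id2 (f ∘ g) ⋆ α.
Proof. now rewrite (hcomp_assoc _ HC), (hcomp_id2 _ HC). Qed.

Lemma whiskerr_comp {a b c d : ob C} (f : hom a b) (g : hom b c) (α : cell c d) :
  (α ⋆ id2 g) ⋆ id2 f = α ⋆ id2 (g ∘ f).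
Proof. now rewrite <- (hcomp_assoc _ HC), (hcomp_id2 _ HC). Qed.

End TwoCellCalculus.

Ltac comp_simpl :=
  match goal with HC : IsTwoCat _ |- _ =>
    repeat progress (
      rewrite ?(comp1_assoc_r HC), ?(comp1_id_l _ HC), ?(comp1_id_r _ HC);
      try match goal with
          | E : _ ∘ _ = _ |- _ => progress rewrite ?E, ?(comp1_eq_r HC E)
          end)
  end.

Ltac is2_shape :=
  match goal with
  | HC : IsTwoCat _ |- _ =>
    lazymatch goal with
    | |- is2 _ _ (_ · _) => eapply (is2_vcomp HC); [is2_shape | is2_shape |]
    | |- is2 _ _ (id2 _) => apply (is2_id2 HC)
    | |- is2 _ _ (_ ⋆ _) => eapply (is2_hcomp HC); [is2_shape | is2_shape]
    | |- is2 ?f ?g ?α =>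
        first [ eassumption
              | (* unfold defined 2-cells such as [desc_of_alg] *)
                let α' := eval red in α in change (is2 f g α'); is2_shape ]
    end
  end.

(* Vertical composition is total, so rewriting with associativity or interchange
   produces side conditions [is2 f g α]; they are solved from the shape of [α],
   modulo the equations between 1-cells in the context. *)
Ltac solve_is2 := eapply is2_congr; [is2_shape | |]; comp_simpl; reflexivity.

Section KanAndAlgebras.
Context {C : TwoCatData} (HC : IsTwoCat C).

Lemma right_kan_cell_unique {z y w : ob C} (f : hom z y) (g : hom z w)
    (r : hom w y) (γ : cell z y) :
  is_right_kan f g r γ ->
  forall (k : hom w y) (β β' : cell w y), is2 k r β -> is2 k r β' ->
  γ · (β ⋆ id2 g) = γ · (β' ⋆ id2 g) -> β = β'.
Proof.
  intros [Hγ Hlift] k β β' Hβ Hβ' E.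
  destruct (Hlift k (γ · (β ⋆ id2 g))) as [β0 [_ Huniq]]; [solve_is2 |].
  rewrite <- (Huniq β), (Huniq β'); auto.
Qed.

Context {b : ob C} (t : hom b b) (m η : cell b b).

Lemma codensity_in_Alg {e : ob C} (p : hom e b) (γ : cell e b) :
  is2 (t ∘ p) p γ -> is_codensity_mult p t γ m -> is_codensity_unit p t γ η ->
  in_Alg t m η e p γ.
Proof. intros Hγ [_ Hm] [_ Hη]; split; [| split]; auto. Qed.

Lemma EM_lift_unique {bT : ob C} {u : hom bT b} {μ : cell bT b} :
  is_EM_object t m η bT u μ ->
  forall {y : ob C} {h : hom y b} {β : cell y b} (g g' : hom y bT),
  in_Alg t m η y h β ->
  u ∘ g = h -> μ ⋆ id2 g = β -> u ∘ g' = h -> μ ⋆ id2 g' = β -> g = g'.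
Proof.
  intros [_ HEM] y h β g g' Halg ug μg ug' μg'.
  destruct (proj1 (HEM y) h β Halg) as [g0 [_ Huniq]].
  rewrite <- (Huniq g), (Huniq g'); auto.
Qed.

Lemma EM_objects_iso {bT L : ob C} {u : hom bT b} {d : hom L b}
    {μ : cell bT b} {ν : cell L b} :
  is_EM_object t m η bT u μ -> is_EM_object t m η L d ν ->
  exists φ : hom L bT, is_iso1 φ /\ u ∘ φ = d /\ μ ⋆ id2 φ = ν.
Proof.
  intros HT HL.
  destruct (proj1 (proj2 HT L) d ν (proj1 HL)) as [φ [[uφ μφ] _]].
  destruct (proj1 (proj2 HL bT) u μ (proj1 HT)) as [ψ [[dψ νψ] _]].
  exists φ; split; [exists ψ; split | split; assumption].
  - apply (EM_lift_unique HL (ψ ∘ φ) (id1 L) (proj1 HL));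
      [| | apply (comp1_id_r _ HC) | apply (hcomp_id_r _ HC)].
    + now rewrite (comp1_assoc _ HC), dψ.
    + now rewrite <- (whiskerr_comp HC), νψ.
  - apply (EM_lift_unique HT (φ ∘ ψ) (id1 bT) (proj1 HT));
      [| | apply (comp1_id_r _ HC) | apply (hcomp_id_r _ HC)].
    + now rewrite (comp1_assoc _ HC), uφ.
    + now rewrite <- (whiskerr_comp HC), μφ.
Qed.

End KanAndAlgebras.

Lemma unique_exists_iff {X : Type} (P Q : X -> Prop) :
  (forall x, P x <-> Q x) -> (exists! x, P x) <-> (exists! x, Q x).
Proof.
  intros H; split; intros [x [Hx Huniq]]; exists x;
    (split; [apply H, Hx | intros y Hy; apply Huniq, H, Hy]).
Qed.

Section Comparison.
Context {C : TwoCatData} (HC : IsTwoCat C).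
Context {e b bb bbb : ob C} (p : hom e b) (d0 d1 : hom b bb) (al : cell e bb)
  (D0 D1 D2 : hom bb bbb) (s0 : hom bb b) (t : hom b b) (γ : cell e b) (m η : cell b b).
Hypotheses (Hop : is_opcomma p bb d0 d1 al) (Hpo : is_2pushout d0 d1 bbb D2 D0).
Hypotheses (D1_d1 : D1 ∘ d1 = D2 ∘ d1) (D1_d0 : D1 ∘ d0 = D0 ∘ d0)
  (D1_al : id2 D1 ⋆ al = (id2 D0 ⋆ al) · (id2 D2 ⋆ al)).
Hypotheses (s0_d0 : s0 ∘ d0 = id1 b) (s0_d1 : s0 ∘ d1 = id1 b) (s0_al : id2 s0 ⋆ al = id2 p).
Hypotheses (Hkan : is_right_kan p p t γ)
  (Hpres : is_right_kan (d0 ∘ p) p (d0 ∘ t) (id2 d0 ⋆ γ)).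
Hypotheses (Hm : is_codensity_mult p t γ m) (Hη : is_codensity_unit p t γ η).

Let al_is2 : is2 (d1 ∘ p) (d0 ∘ p) al := proj1 Hop.
Let D2_d0 : D2 ∘ d0 = D0 ∘ d1 := proj1 Hpo.
Let γ_is2 : is2 (t ∘ p) p γ := proj1 Hkan.
Let m_is2 : is2 (t ∘ t) t m := proj1 Hm.
Let η_is2 : is2 (id1 b) t η := proj1 Hη.

Lemma exists_σ :
  exists σ : cell b bb, is2 d1 (d0 ∘ t) σ /\ (id2 d0 ⋆ γ) · (σ ⋆ id2 p) = al.
Proof.
  destruct (proj2 Hpres d1 al al_is2) as [σ [Hσ _]]; exists σ; exact Hσ.
Qed.

Lemma exists_r : exists r : hom bb b, r ∘ d0 = id1 b /\ r ∘ d1 = t /\ id2 r ⋆ al = γ.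
Proof.
  destruct (proj1 (proj2 Hop b) (id1 b) t γ) as [r [Hr _]]; [solve_is2 | exists r; exact Hr].
Qed.

Section Transposition.
Context (σ : cell b bb) (r : hom bb b).
Hypotheses (σ_is2 : is2 d1 (d0 ∘ t) σ) (σ_γ : (id2 d0 ⋆ γ) · (σ ⋆ id2 p) = al).
Hypotheses (r_d0 : r ∘ d0 = id1 b) (r_d1 : r ∘ d1 = t) (r_al : id2 r ⋆ al = γ).

Lemma whiskerl_σ_γ (k : hom bb b) :
  k ∘ d0 = id1 b -> γ · ((id2 k ⋆ σ) ⋆ id2 p) = id2 k ⋆ al.
Proof.
  intros k_d0.
  rewrite <- σ_γ, (whiskerl_vcomp HC k (d1 ∘ p) (d0 ∘ t ∘ p) (d0 ∘ p)) by solve_is2.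
  now rewrite (whiskerl_comp HC), k_d0, (hcomp_id_l _ HC), (hcomp_assoc _ HC).
Qed.

Lemma r_σ : id2 r ⋆ σ = id2 t.
Proof.
  apply (right_kan_cell_unique HC _ _ _ _ Hkan t); [solve_is2 | solve_is2 |].
  rewrite (whiskerl_σ_γ r r_d0), r_al, (hcomp_id2 _ HC).
  symmetry; exact (vcomp_id2 HC _ _ _ γ_is2).
Qed.

Lemma s0_σ : id2 s0 ⋆ σ = η.
Proof.
  apply (right_kan_cell_unique HC _ _ _ _ Hkan (id1 b)); [solve_is2 | exact η_is2 |].
  rewrite (whiskerl_σ_γ s0 s0_d0), s0_al.
  symmetry; exact (proj2 Hη).
Qed.

Definition desc_of_alg {y : ob C} (h : hom y b) (β : cell y b) : cell y bb :=
  (id2 d0 ⋆ β) · (σ ⋆ id2 h).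

Lemma desc_of_alg_is2 {y : ob C} (h : hom y b) (β : cell y b) :
  is2 (t ∘ h) h β -> is2 (d1 ∘ h) (d0 ∘ h) (desc_of_alg h β).
Proof. intros; solve_is2. Qed.

Lemma r_desc_of_alg {y : ob C} (h : hom y b) (β : cell y b) :
  is2 (t ∘ h) h β -> id2 r ⋆ desc_of_alg h β = β.
Proof.
  intros Hβ; unfold desc_of_alg.
  rewrite (whiskerl_vcomp HC r (d1 ∘ h) (d0 ∘ t ∘ h) (d0 ∘ h)) by solve_is2.
  rewrite (whiskerl_comp HC), r_d0, (hcomp_id_l _ HC), (hcomp_assoc _ HC), r_σ,
    (hcomp_id2 _ HC).
  exact (vcomp_id2 HC _ _ _ Hβ).
Qed.

Lemma s0_desc_of_alg {y : ob C} (h : hom y b) (β : cell y b) :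
  is2 (t ∘ h) h β -> id2 s0 ⋆ desc_of_alg h β = β · (η ⋆ id2 h).
Proof.
  intros Hβ; unfold desc_of_alg.
  rewrite (whiskerl_vcomp HC s0 (d1 ∘ h) (d0 ∘ t ∘ h) (d0 ∘ h)) by solve_is2.
  now rewrite (whiskerl_comp HC), s0_d0, (hcomp_id_l _ HC), (hcomp_assoc _ HC), s0_σ.
Qed.

Lemma desc_of_alg_whiskerr {y z : ob C} (h : hom y b) (g : hom z y) (β : cell y b) :
  is2 (t ∘ h) h β -> desc_of_alg (h ∘ g) (β ⋆ id2 g) = desc_of_alg h β ⋆ id2 g.
Proof.
  intros Hβ; unfold desc_of_alg.
  rewrite (whiskerr_vcomp HC g (d1 ∘ h) (d0 ∘ t ∘ h) (d0 ∘ h)) by solve_is2.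
  now rewrite (hcomp_assoc _ HC), (whiskerr_comp HC).
Qed.

Lemma alg_hom_iff_desc_hom {y : ob C} (h1 h0 : hom y b) (β1 β0 ξ : cell y b) :
  is2 (t ∘ h1) h1 β1 -> is2 (t ∘ h0) h0 β0 -> is2 h1 h0 ξ ->
  (ξ · β1 = β0 · (id2 t ⋆ ξ) <->
   desc_of_alg h0 β0 · (id2 d1 ⋆ ξ) = (id2 d0 ⋆ ξ) · desc_of_alg h1 β1).
Proof.
  intros Hβ1 Hβ0 Hξ; split.
  - intros Hhom; unfold desc_of_alg.
    rewrite <- (vcompA HC (d1 ∘ h1) (d1 ∘ h0) (d0 ∘ t ∘ h0) (d0 ∘ h0)) by solve_is2.
    rewrite (whisker_exchange HC d1 (d0 ∘ t) h1 h0 σ ξ σ_is2 Hξ).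
    rewrite (vcompA HC (d1 ∘ h1) (d0 ∘ t ∘ h1) (d0 ∘ t ∘ h0) (d0 ∘ h0)) by solve_is2.
    rewrite <- (whiskerl_comp HC), <- (whiskerl_vcomp HC d0 (t ∘ h1) (t ∘ h0) h0)
      by solve_is2.
    rewrite <- Hhom, (whiskerl_vcomp HC d0 (t ∘ h1) h1 h0) by solve_is2.
    symmetry; apply (vcompA HC (d1 ∘ h1) (d0 ∘ t ∘ h1) (d0 ∘ h1) (d0 ∘ h0)); solve_is2.
  - intros Hdesc; apply (f_equal (hcomp (id2 r))) in Hdesc.
    erewrite !(whiskerl_vcomp HC r) in Hdesc by solve_is2.
    rewrite !r_desc_of_alg, !(whiskerl_comp HC), r_d1, r_d0, (hcomp_id_l _ HC) in Hdesc
      by assumption.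
    now symmetry.
Qed.

Lemma exists_reflection_unit :
  exists ω0 : cell bb bb,
    is2 (id1 bb) (d0 ∘ r) ω0 /\ ω0 ⋆ id2 d0 = id2 d0 /\ ω0 ⋆ id2 d1 = σ.
Proof.
  destruct (proj2 (proj2 Hop bb) (id1 bb) (d0 ∘ r) (id2 d0) σ) as [ω0 [Hω0 _]];
    [solve_is2 | solve_is2 | | exists ω0; exact Hω0].
  rewrite (hcomp_id2 _ HC), (hcomp_id_l _ HC), (id2_vcomp HC _ _ _ al_is2).
  now rewrite <- (whiskerl_comp HC), r_al, σ_γ.
Qed.

Lemma exists_Q : exists Q : hom bbb b, Q ∘ D2 = t ∘ r /\ Q ∘ D0 = r.
Proof.
  destruct (proj1 (proj2 Hpo b) (t ∘ r) r) as [Q [HQ _]];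
    [comp_simpl; reflexivity | exists Q; exact HQ].
Qed.

Section Cocycle.
Context (ω0 : cell bb bb).
Hypotheses (ω0_is2 : is2 (id1 bb) (d0 ∘ r) ω0)
  (ω0_d0 : ω0 ⋆ id2 d0 = id2 d0) (ω0_d1 : ω0 ⋆ id2 d1 = σ).

Lemma desc_of_alg_r {y : ob C} (h : hom y b) (β : cell y bb) :
  is2 (d1 ∘ h) (d0 ∘ h) β -> desc_of_alg h (id2 r ⋆ β) = β.
Proof.
  intros Hβ.
  pose proof (whisker_exchange HC _ _ _ _ ω0 β ω0_is2 Hβ) as E.
  rewrite <- (hcomp_id2 _ HC _ _ _ h d0), <- (hcomp_id2 _ HC _ _ _ h d1),
    !(hcomp_assoc _ HC), ω0_d0, ω0_d1, (hcomp_id2 _ HC), (hcomp_id_l _ HC),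
    (id2_vcomp HC _ _ _ Hβ) in E.
  unfold desc_of_alg; rewrite (whiskerl_comp HC); symmetry; exact E.
Qed.

Context (Q : hom bbb b).
Hypotheses (Q_D2 : Q ∘ D2 = t ∘ r) (Q_D0 : Q ∘ D0 = r).

Lemma exists_ω1 :
  exists ω1 : cell bb b,
    is2 (Q ∘ D1) r ω1 /\ ω1 ⋆ id2 d0 = id2 (id1 b) /\ ω1 ⋆ id2 d1 = m.
Proof.
  destruct (proj2 (proj2 Hop b) (Q ∘ D1) r (id2 (id1 b)) m) as [ω1 [Hω1 _]];
    [solve_is2 | solve_is2 | | exists ω1; exact Hω1].
  rewrite (hcomp_id_l _ HC), (id2_vcomp HC (Q ∘ D1 ∘ d1 ∘ p) p) by solve_is2.
  rewrite <- (whiskerl_comp HC), D1_al,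
    (whiskerl_vcomp HC Q (D1 ∘ d1 ∘ p) (D0 ∘ d1 ∘ p) (D0 ∘ d0 ∘ p)) by solve_is2.
  rewrite !(whiskerl_comp HC), Q_D0, Q_D2, r_al, <- (whiskerl_comp HC), r_al.
  symmetry; exact (proj2 Hm).
Qed.

Lemma exists_ω2 :
  exists ω2 : cell bbb bbb,
    is2 (id1 bbb) (D0 ∘ d0 ∘ Q) ω2 /\ ω2 ⋆ id2 D0 = id2 D0 ⋆ ω0.
Proof.
  (* ω2 is glued by the pushout from D0 ω0 on D0 and, on D2, from the opcomma
     2-cell with components D0 σ on δ0 and (D0 (σ t))·(D2 σ) on δ1. *)
  destruct (proj2 (proj2 Hop bbb) D2 ((D0 ∘ d0 ∘ t) ∘ r) (id2 D0 ⋆ σ)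
     ((id2 D0 ⋆ (σ ⋆ id2 t)) · (id2 D2 ⋆ σ))) as [ξ [[Hξ [ξ_d0 _]] _]];
    [solve_is2 | solve_is2 | |].
  - rewrite <- (whiskerl_comp HC), r_al.
    assert (E1 : (id2 (D0 ∘ d0 ∘ t) ⋆ γ) · ((id2 D0 ⋆ (σ ⋆ id2 t)) ⋆ id2 p) =
                 (id2 D0 ⋆ (σ ⋆ id2 p)) · (id2 (D0 ∘ d1) ⋆ γ)).
    { rewrite <- (hcomp_assoc _ HC), (whiskerr_comp HC), <- (whiskerl_comp HC).
      rewrite <- (whiskerl_vcomp HC D0 (d1 ∘ t ∘ p) (d0 ∘ t ∘ t ∘ p) (d0 ∘ t ∘ p))
        by solve_is2.
      rewrite <- (hcomp_vcomp_r HC _ _ _ _ σ γ σ_is2 γ_is2),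
        (hcomp_vcomp_l HC _ _ _ _ σ γ σ_is2 γ_is2).
      rewrite (whiskerl_vcomp HC D0 (d1 ∘ t ∘ p) (d1 ∘ p) (d0 ∘ t ∘ p)) by solve_is2.
      now rewrite (whiskerl_comp HC). }
    assert (E2 : (id2 (D0 ∘ d1) ⋆ γ) · ((id2 D2 ⋆ σ) ⋆ id2 p) = id2 D2 ⋆ al).
    { rewrite <- D2_d0, <- (whiskerl_comp HC), <- (hcomp_assoc _ HC).
      rewrite <- (whiskerl_vcomp HC D2 (d1 ∘ p) (d0 ∘ t ∘ p) (d0 ∘ p)) by solve_is2.
      now rewrite σ_γ. }
    erewrite (whiskerr_vcomp HC) by solve_is2.
    rewrite (vcompA HC (D2 ∘ d1 ∘ p) (D0 ∘ d1 ∘ t ∘ p) (D0 ∘ d0 ∘ t ∘ t ∘ p)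
      (D0 ∘ d0 ∘ t ∘ p)) by solve_is2.
    rewrite E1, <- (vcompA HC (D2 ∘ d1 ∘ p) (D0 ∘ d1 ∘ t ∘ p) (D0 ∘ d1 ∘ p)
      (D0 ∘ d0 ∘ t ∘ p)) by solve_is2.
    now rewrite E2, (hcomp_assoc _ HC).
  - destruct (proj2 (proj2 Hpo bbb) (id1 bbb) (D0 ∘ d0 ∘ Q) ξ (id2 D0 ⋆ ω0))
      as [ω2 [[Hω2 [_ Hω2D0]] _]]; [solve_is2 | solve_is2 | | exists ω2; auto].
    now rewrite ξ_d0, <- (hcomp_assoc _ HC), ω0_d1.
Qed.

Context (ω1 : cell bb b) (ω2 : cell bbb bbb).
Hypotheses (ω1_is2 : is2 (Q ∘ D1) r ω1)
  (ω1_d0 : ω1 ⋆ id2 d0 = id2 (id1 b)) (ω1_d1 : ω1 ⋆ id2 d1 = m).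
Hypotheses (ω2_is2 : is2 (id1 bbb) (D0 ∘ d0 ∘ Q) ω2) (ω2_D0 : ω2 ⋆ id2 D0 = id2 D0 ⋆ ω0).

Lemma Q_cocycle {y : ob C} (h : hom y b) (β : cell y bb) :
  is2 (d1 ∘ h) (d0 ∘ h) β ->
  id2 Q ⋆ ((id2 D0 ⋆ β) · (id2 D2 ⋆ β)) = (id2 r ⋆ β) · (id2 t ⋆ (id2 r ⋆ β)).
Proof.
  intros Hβ; erewrite (whiskerl_vcomp HC) by solve_is2.
  now rewrite !(whiskerl_comp HC), Q_D0, Q_D2, <- (whiskerl_comp HC).
Qed.

Lemma Q_D1_whiskerl {y : ob C} (h : hom y b) (β : cell y bb) :
  is2 (d1 ∘ h) (d0 ∘ h) β -> id2 Q ⋆ (id2 D1 ⋆ β) = (id2 r ⋆ β) · (m ⋆ id2 h).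
Proof.
  intros Hβ.
  pose proof (whisker_exchange HC _ _ _ _ ω1 β ω1_is2 Hβ) as E.
  rewrite <- (hcomp_id2 _ HC _ _ _ h d0), <- (hcomp_id2 _ HC _ _ _ h d1),
    !(hcomp_assoc _ HC), ω1_d0, ω1_d1, (hcomp_id_l _ HC) in E.
  rewrite (whiskerl_comp HC), <- E; symmetry; eapply (id2_vcomp HC); solve_is2.
Qed.

Lemma whiskerl_Q_inj {y : ob C} (h : hom y b) (X Y : cell y bbb) :
  is2 (D2 ∘ d1 ∘ h) (D0 ∘ d0 ∘ h) X -> is2 (D2 ∘ d1 ∘ h) (D0 ∘ d0 ∘ h) Y ->
  id2 Q ⋆ X = id2 Q ⋆ Y -> X = Y.
Proof.
  assert (ω2_D0_d0 : ω2 ⋆ id2 (D0 ∘ d0 ∘ h) = id2 (D0 ∘ d0 ∘ h)).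
  { rewrite <- (hcomp_id2 _ HC _ _ _ (d0 ∘ h) D0), <- (hcomp_id2 _ HC _ _ _ h d0),
      !(hcomp_assoc _ HC), ω2_D0, <- (hcomp_assoc _ HC _ _ _ _ (id2 d0) ω0 (id2 D0)).
    now rewrite ω0_d0. }
  assert (retract : forall Z, is2 (D2 ∘ d1 ∘ h) (D0 ∘ d0 ∘ h) Z ->
    Z = (id2 D0 ⋆ (id2 d0 ⋆ (id2 Q ⋆ Z))) · (ω2 ⋆ id2 (D2 ∘ d1 ∘ h))).
  { intros Z HZ.
    pose proof (whisker_exchange HC _ _ _ _ ω2 Z ω2_is2 HZ) as E.
    rewrite ω2_D0_d0, (hcomp_id_l _ HC), (id2_vcomp HC _ _ _ HZ) in E.
    now rewrite (whiskerl_comp HC d0 Q), (whiskerl_comp HC D0). }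
  intros HX HY E; now rewrite (retract X HX), (retract Y HY), E.
Qed.

Lemma cocycle_iff_alg_assoc {y : ob C} (h : hom y b) (β : cell y b) :
  is2 (t ∘ h) h β ->
  ((id2 D0 ⋆ desc_of_alg h β) · (id2 D2 ⋆ desc_of_alg h β) = id2 D1 ⋆ desc_of_alg h β <->
   β · (id2 t ⋆ β) = β · (m ⋆ id2 h)).
Proof.
  intros Hβ.
  assert (Hdesc := desc_of_alg_is2 h β Hβ).
  split; intros E.
  - apply (f_equal (hcomp (id2 Q))) in E.
    now rewrite (Q_cocycle h _ Hdesc), (Q_D1_whiskerl h _ Hdesc), r_desc_of_alg in E.
  - apply (whiskerl_Q_inj h); [solve_is2 | solve_is2 |].
    now rewrite (Q_cocycle h _ Hdesc), (Q_D1_whiskerl h _ Hdesc), r_desc_of_alg.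
Qed.

Lemma in_Alg_iff_in_Desc {y : ob C} (h : hom y b) (β : cell y b) :
  is2 (t ∘ h) h β ->
  (in_Alg t m η y h β <-> in_Desc d0 d1 D0 D1 D2 s0 y h (desc_of_alg h β)).
Proof.
  intros Hβ; unfold in_Alg, in_Desc.
  rewrite (cocycle_iff_alg_assoc h β Hβ), (s0_desc_of_alg h β Hβ).
  split; intros [_ [Hassoc Hunit]]; (split; [solve_is2 | split; assumption]).
Qed.

Lemma in_Desc_iff_in_Alg {y : ob C} (h : hom y b) (β : cell y bb) :
  is2 (d1 ∘ h) (d0 ∘ h) β ->
  (in_Desc d0 d1 D0 D1 D2 s0 y h β <-> in_Alg t m η y h (id2 r ⋆ β)).
Proof.
  intros Hβ; rewrite (in_Alg_iff_in_Desc h (id2 r ⋆ β)) by solve_is2.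
  now rewrite (desc_of_alg_r h β Hβ).
Qed.

Lemma desc_of_alg_whiskerr_iff {X y : ob C} (u : hom X b) (μ : cell X b)
    (g : hom y X) (β : cell y bb) :
  is2 (t ∘ u) u μ -> is2 (d1 ∘ u ∘ g) (d0 ∘ u ∘ g) β ->
  (μ ⋆ id2 g = id2 r ⋆ β <-> desc_of_alg u μ ⋆ id2 g = β).
Proof.
  intros Hμ Hβ; rewrite <- (desc_of_alg_whiskerr u g μ Hμ); split; intros E.
  - now rewrite E, desc_of_alg_r.
  - now rewrite <- E, r_desc_of_alg by solve_is2.
Qed.

Lemma alg_hom_iff_desc_hom_whiskerr {X y : ob C} (u : hom X b) (μ : cell X b)
    (g1 g0 : hom y X) (ξ : cell y b) :
  is2 (t ∘ u) u μ -> is2 (u ∘ g1) (u ∘ g0) ξ ->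
  (ξ · (μ ⋆ id2 g1) = (μ ⋆ id2 g0) · (id2 t ⋆ ξ) <->
   (desc_of_alg u μ ⋆ id2 g0) · (id2 d1 ⋆ ξ) = (id2 d0 ⋆ ξ) · (desc_of_alg u μ ⋆ id2 g1)).
Proof.
  intros Hμ Hξ.
  rewrite (alg_hom_iff_desc_hom (u ∘ g1) (u ∘ g0) (μ ⋆ id2 g1) (μ ⋆ id2 g0) ξ)
    by solve_is2.
  now rewrite !(desc_of_alg_whiskerr u _ μ Hμ).
Qed.

Lemma EM_object_iff_lax_descent_object (X : ob C) (u : hom X b) (μ : cell X b) :
  is2 (t ∘ u) u μ ->
  (is_EM_object t m η X u μ <->
   is_lax_descent_object d0 d1 D0 D1 D2 s0 X u (desc_of_alg u μ)).
Proof.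
  intros Hμ; unfold is_EM_object, is_lax_descent_object.
  rewrite (in_Alg_iff_in_Desc u μ Hμ).
  split; intros [Hobj Huniv]; split; [exact Hobj | | exact Hobj |]; intros y;
    destruct (Huniv y) as [Hlift1 Hlift2]; split.
  - intros h β Hdesc.
    assert (Hβ : is2 (d1 ∘ h) (d0 ∘ h) β) by apply Hdesc.
    rewrite (in_Desc_iff_in_Alg h β Hβ) in Hdesc.
    specialize (Hlift1 h _ Hdesc); revert Hlift1.
    apply unique_exists_iff; intros g; split; intros [<- E]; split; auto;
      apply (desc_of_alg_whiskerr_iff u μ g β Hμ Hβ); exact E.
  - intros g1 g0 ξ Hξ Hdesc.
    apply Hlift2; [exact Hξ |]; apply (alg_hom_iff_desc_hom_whiskerr u μ g1 g0 ξ Hμ Hξ).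
    exact Hdesc.
  - intros h β Halg.
    assert (Hβ : is2 (t ∘ h) h β) by apply Halg.
    rewrite (in_Alg_iff_in_Desc h β Hβ) in Halg.
    specialize (Hlift1 h _ Halg); revert Hlift1.
    apply unique_exists_iff; intros g; split; intros [<- E]; split; auto;
      rewrite <- (desc_of_alg_whiskerr_iff u μ g), r_desc_of_alg in * by solve_is2;
      exact E.
  - intros g1 g0 ξ Hξ Halg.
    apply Hlift2; [exact Hξ |]; apply (alg_hom_iff_desc_hom_whiskerr u μ g1 g0 ξ Hμ Hξ).
    exact Halg.
Qed.

Lemma lax_descent_object_of_EM_object (X : ob C) (u : hom X b) (μ : cell X b) :
  is_EM_object t m η X u μ ->
  is_lax_descent_object d0 d1 D0 D1 D2 s0 X u (desc_of_alg u μ).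
Proof. intros H; apply (EM_object_iff_lax_descent_object X u μ (proj1 (proj1 H))), H. Qed.

Lemma EM_object_of_lax_descent_object (L : ob C) (d : hom L b) (Ψ : cell L bb) :
  is_lax_descent_object d0 d1 D0 D1 D2 s0 L d Ψ -> is_EM_object t m η L d (id2 r ⋆ Ψ).
Proof.
  intros H; assert (HΨ : is2 (d1 ∘ d) (d0 ∘ d) Ψ) by apply H.
  apply (EM_object_iff_lax_descent_object L d _); [solve_is2 |].
  now rewrite (desc_of_alg_r d Ψ HΨ).
Qed.

End Cocycle.
End Transposition.

Lemma EM_lax_descent_comparison :
  exists r : hom bb b, id2 r ⋆ al = γ /\
    (forall X u μ, is_EM_object t m η X u μ ->
       exists Ψ, is_lax_descent_object d0 d1 D0 D1 D2 s0 X u Ψ) /\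
    (forall L d Ψ, is_lax_descent_object d0 d1 D0 D1 D2 s0 L d Ψ ->
       is_EM_object t m η L d (id2 r ⋆ Ψ)).
Proof.
  destruct exists_σ as (σ & σ_is2 & σ_γ).
  destruct exists_r as (r & r_d0 & r_d1 & r_al).
  destruct (exists_reflection_unit σ r σ_is2 σ_γ r_d0 r_d1 r_al)
    as (ω0 & ω0_is2 & ω0_d0 & ω0_d1).
  destruct (exists_Q r r_d0 r_d1) as (Q & Q_D2 & Q_D0).
  destruct (exists_ω1 r r_d0 r_d1 r_al Q Q_D2 Q_D0) as (ω1 & ω1_is2 & ω1_d0 & ω1_d1).
  destruct (exists_ω2 σ r σ_is2 σ_γ r_d0 r_d1 r_al ω0 ω0_is2 ω0_d1 Q Q_D2 Q_D0)
    as (ω2 & ω2_is2 & ω2_D0).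
  exists r; split; [exact r_al | split].
  - intros X u μ HEM; eexists.
    apply (lax_descent_object_of_EM_object σ r σ_is2 σ_γ r_d0 r_d1 r_al ω0 ω0_is2
      ω0_d0 ω0_d1 Q Q_D2 Q_D0 ω1 ω2 ω1_is2 ω1_d0 ω1_d1 ω2_is2 ω2_D0 X u μ HEM).
  - apply (EM_object_of_lax_descent_object σ r σ_is2 σ_γ r_d0 r_d1 r_al ω0 ω0_is2
      ω0_d0 ω0_d1 Q Q_D2 Q_D0 ω1 ω2 ω1_is2 ω1_d0 ω1_d1 ω2_is2 ω2_D0).
Qed.

End Comparison.

Theorem theorem4p8 (C : TwoCatData) (HC : IsTwoCat C)
  (e b : ob C) (p : hom e b)
  (bb : ob C) (d0 d1 : hom b bb) (al : cell e bb)
  (bbb : ob C) (D0 D1 D2 : hom bb bbb) (s0 : hom bb b)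
  (Hcok : is_2cokernel_diagram p bb d0 d1 al bbb D0 D1 D2 s0)
  (t : hom b b) (γ : cell e b)
  (Hkan : is_right_kan p p t γ)
  (Hpres : is_right_kan (d0 ∘ p) p (d0 ∘ t) (id2 d0 ⋆ γ))
  (m η : cell b b)
  (Hm : is_codensity_mult p t γ m) (Hη : is_codensity_unit p t γ η) :
  ((exists (bT : ob C) (u : hom bT b) (μ : cell bT b), is_EM_object t m η bT u μ) <->
   (exists (L : ob C) (d : hom L b) (Ψ : cell L bb),
       is_lax_descent_object d0 d1 D0 D1 D2 s0 L d Ψ)) /\
  (forall (bT : ob C) (u : hom bT b) (μ : cell bT b)
          (L : ob C) (d : hom L b) (Ψ : cell L bb)
          (pT : hom e bT) (pH : hom e L),
     is_EM_object t m η bT u μ ->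
     is_lax_descent_object d0 d1 D0 D1 D2 s0 L d Ψ ->
     u ∘ pT = p -> μ ⋆ id2 pT = γ ->
     d ∘ pH = p -> Ψ ⋆ id2 pH = al ->
     exists φ : hom L bT, is_iso1 φ /\ u ∘ φ = d /\ φ ∘ pH = pT).
Proof.
  destruct Hcok as (Hop & Hpo & (D1_d1 & D1_d0 & D1_al) & (s0_d0 & s0_d1 & s0_al)).
  destruct (EM_lax_descent_comparison HC p d0 d1 al D0 D1 D2 s0 t γ m η Hop Hpo
              D1_d1 D1_d0 D1_al s0_d0 s0_d1 s0_al Hkan Hpres Hm Hη)
    as (r & r_al & desc_of_EM & EM_of_desc).
  split; [split |].
  - intros (bT & u & μ & HEM); exists bT, u; exact (desc_of_EM bT u μ HEM).
  - intros (L & d & Ψ & HLD); exists L, d; eexists; exact (EM_of_desc L d Ψ HLD).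
  - intros bT u μ L d Ψ pT pH HEM HLD upT μpT dpH ΨpH.
    destruct (EM_objects_iso HC t m η HEM (EM_of_desc L d Ψ HLD)) as (φ & Hφ & uφ & μφ).
    exists φ; split; [exact Hφ | split; [exact uφ |]].
    apply (EM_lift_unique t m η HEM _ _ (codensity_in_Alg t m η p γ (proj1 Hkan) Hm Hη));
      [| | exact upT | exact μpT].
    + now rewrite (comp1_assoc _ HC), uφ.
    + now rewrite <- (whiskerr_comp HC), μφ, <- (hcomp_assoc _ HC), ΨpH.
Qed.
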